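(* Let $\mathbb{L}\subseteq\mathbb{R}^d\times\mathbb{R}$ be any closed convex cone, assume Boundedness, and let $A_0,\dots,A_T\in\mathcal{A}$. Let $(y_t,b_t)$ be generated by the projected strategic perceptron with cone $\mathbb{L}$ and stepsize $\gamma=1$, and $\mathcal{M}_T=\{t\in\{0,\dots,T\}:\hat\ell(r(A_t,y_t,b_t),y_t,b_t)\ne\ell(A_t)\}$. Then for every $(y,b)\in\mathbb{L}\setminus\{0\}$, $$|\mathcal{M}_T|-\sum_{t\in\mathcal{M}_T}L_{\mathrm{hinge}}\big((y,b);(s(A_t,y_t,b_t),1),\ell(A_t)\big)\le\sqrt{\|y\|_2^2+b^2}\,\sqrt{\widetilde D^2+1}\,\sqrt{|\mathcal{M}_T|}.$$
   Context: Setting: $\mathcal{A}\subseteq\mathbb{R}^d$, labels $\ell(A)\in\{\pm1\}$; $\operatorname{sign}(0)=+1$; norm $\|\cdot\|$ with dual $\|y\|_*=\max_{\|w\|\le1}y^\top w$; constant $c>0$; a fixed selection $v$ with $v(0)=0$ and $v(y)\in\arg\max_{\|w\|\le1}y^\top w$ for $y\ne0$, with $v(\lambda y)=v(y)$ for $\lambda>0$. Predicted label $\hat\ell(x,y,b)=\operatorname{sign}(y^\top x+b-2\|y\|_*/c)$. Response: for $y\ne0$, $r(A,y,b)=A+(\tfrac2c-\tfrac{y^\top A+b}{\|y\|_*})v(y)$ if $0\le\tfrac{y^\top A+b}{\|y\|_*}<\tfrac2c$, else $A$. Proxy: for $y\ne0$, $s(A,y,b)=A-\tfrac{y^\top A+b}{\|y\|_*}v(y)$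 if $0\le\tfrac{y^\top A+b}{\|y\|_*}<\tfrac2c$ and $\ell(A)=-1$; $=A+(\tfrac2c-\tfrac{y^\top A+b}{\|y\|_*})v(y)$ if the range condition holds and $\ell(A)=+1$; $=A$ otherwise; $r(A,0,b)=s(A,0,b)=A$. Boundedness: $D:=\sup_{A\in\mathcal{A}}\|A\|_2<\infty$; $C_{\|\cdot\|}=\max_y\|v(y)\|_2$; $\widetilde D=D+\tfrac2cC_{\|\cdot\|}$. Hinge loss: $L_{\mathrm{hinge}}(q;\xi,\ell)=\max\{0,1-\ell\,q^\top\xi\}$ for $q,\xi\in\mathbb{R}^{d+1}$. Projected strategic perceptron with closed convex cone $\mathbb{L}$ and stepsize $\gamma>0$: $q_0=(y_0,b_0)=(0,0)$; for $t=0,1,\dots,T$: agent $A_t$ is shown $(y_t,b_t)$, responds $r(A_t,y_t,b_t)$, is predicted $\hat\ell(r(A_t,y_t,b_t),y_t,b_t)$; with $\xi_t=(s(A_t,y_t,b_t),1)$, set $z_{t+1}=q_t+\gamma\ell(A_t)\xi_t$ if the prediction differs from $\ell(A_t)$, else $z_{t+1}=q_t$; $q_{t+1}=(y_{t+1},b_{t+1})=\Pi_{\mathbb{L}}(z_{t+1})$ (Euclidean projection). *)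

From HB Require Import structures.
From mathcomp Require Import all_boot all_order all_algebra.
From mathcomp Require Import all_classical all_reals all_analysis.
Set Implicit Arguments. Unset Strict Implicit. Unset Printing Implicit Defensive.
Import Order.TTheory GRing.Theory Num.Theory.
Import numFieldNormedType.Exports.
Local Open Scope classical_set_scope.
Local Open Scope ring_scope.

Section Defs.
Variables (R : realType) (d : nat).

Definition dotv (x y : 'rV[R]_d) : R := \sum_(i < d) x 0 i * y 0 i.
Definition norm2 (x : 'rV[R]_d) : R := Num.sqrt (dotv x x).

Definition is_norm (nrm : 'rV[R]_d -> R) : Prop :=
  [/\ forall x, 0 <= nrm x,
      forall x, nrm x = 0 -> x = 0,
      forall (a : R) x, nrm (a *: x) = `|a| * nrm x &
      forall x y, nrm (x + y) <= nrm x + nrm y].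

Definition dualn (nrm : 'rV[R]_d -> R) (y : 'rV[R]_d) : R :=
  sup [set dotv y w | w in [set w | nrm w <= 1]].

Definition is_selection (nrm : 'rV[R]_d -> R) (v : 'rV[R]_d -> 'rV[R]_d) : Prop :=
  [/\ v 0 = 0,
      forall y, y != 0 -> nrm (v y) <= 1 /\
                (forall w, nrm w <= 1 -> dotv y w <= dotv y (v y)) &
      forall (l : R) y, 0 < l -> v (l *: y) = v y].

Definition sgn (r : R) : R := if 0 <= r then 1 else -1.

Definition ell (lab : 'rV[R]_d -> bool) (A : 'rV[R]_d) : R :=
  if lab A then 1 else -1.

Variables (nrm : 'rV[R]_d -> R) (c : R) (v : 'rV[R]_d -> 'rV[R]_d).

Definition predl (x y : 'rV[R]_d) (b : R) : R :=
  sgn (dotv y x + b - 2 * dualn nrm y / c).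

Definition in_range (A y : 'rV[R]_d) (b : R) : bool :=
  (0 <= (dotv y A + b) / dualn nrm y) && ((dotv y A + b) / dualn nrm y < 2 / c).

Definition resp (A y : 'rV[R]_d) (b : R) : 'rV[R]_d :=
  if y == 0 then A else
  if in_range A y b then A + (2 / c - (dotv y A + b) / dualn nrm y) *: v y
  else A.

Definition proxy (lab : 'rV[R]_d -> bool) (A y : 'rV[R]_d) (b : R) : 'rV[R]_d :=
  if y == 0 then A else
  if in_range A y b then
    (if lab A then A + (2 / c - (dotv y A + b) / dualn nrm y) *: v y
     else A - ((dotv y A + b) / dualn nrm y) *: v y)
  else A.

End Defs.

Section Perceptron.
Variables (R : realType) (d : nat).

Definition pdot (p q : 'rV[R]_d * R) : R := dotv p.1 q.1 + p.2 * q.2.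
Definition pnorm2 (p : 'rV[R]_d * R) : R := Num.sqrt (pdot p p).
Definition psub (p q : 'rV[R]_d * R) : 'rV[R]_d * R := (p.1 - q.1, p.2 - q.2).

Definition closed_convex_cone (L : set ('rV[R]_d * R)) : Prop :=
  [/\ closed L, L (0, 0),
      forall p q, L p -> L q -> L (p.1 + q.1, p.2 + q.2) &
      forall (l : R) p, 0 <= l -> L p -> L (l *: p.1, l * p.2)].

Definition is_proj (L : set ('rV[R]_d * R)) (z p : 'rV[R]_d * R) : Prop :=
  L p /\ forall q, L q -> pnorm2 (psub z p) <= pnorm2 (psub z q).

Definition hinge (q xi : 'rV[R]_d * R) (l : R) : R :=
  Num.max 0 (1 - l * pdot q xi).

Variables (nrm : 'rV[R]_d -> R) (c : R) (v : 'rV[R]_d -> 'rV[R]_d)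
  (lab : 'rV[R]_d -> bool).

Definition mistake (A y : 'rV[R]_d) (b : R) : bool :=
  predl nrm c (resp nrm c v A y b) y b != ell lab A.

Definition xi (A y : 'rV[R]_d) (b : R) : 'rV[R]_d * R :=
  (proxy nrm c v lab A y b, 1).

Definition pre_update (gamma : R) (A : 'rV[R]_d) (q : 'rV[R]_d * R) : 'rV[R]_d * R :=
  if mistake A q.1 q.2 then
    (q.1 + (gamma * ell lab A) *: (xi A q.1 q.2).1,
     q.2 + gamma * ell lab A * (xi A q.1 q.2).2)
  else q.

Definition is_projected_perceptron (L : set ('rV[R]_d * R)) (gamma : R)
    (T : nat) (A : nat -> 'rV[R]_d) (q : nat -> 'rV[R]_d * R) : Prop :=
  q 0%N = (0, 0) /\
  forall t, (t < T)%N -> is_proj L (pre_update gamma (A t) (q t)) (q t.+1).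

Definition mistakes (T : nat) (A : nat -> 'rV[R]_d) (q : nat -> 'rV[R]_d * R) : seq nat :=
  [seq t <- iota 0 T.+1 | mistake (A t) (q t).1 (q t).2].

End Perceptron.

From HB Require Import structures.
From mathcomp Require Import all_boot all_order all_algebra.
From mathcomp Require Import all_classical all_reals all_analysis.
From mathcomp Require Import lra ring.
Import Order.TTheory GRing.Theory Num.Theory.
Import numFieldNormedType.Exports.
Local Open Scope classical_set_scope.
Local Open Scope ring_scope.
Set Implicit Arguments. Unset Strict Implicit. Unset Printing Implicit Defensive.

(* Fix u = (y, b) in the cone and run the perceptron potential argument.  On
   a mistake round the update adds l_t xi_t, which raises <q, u> by at least
   1 - hinge_t and |q|^2 by at most D~^2 + 1: the cross term l_t <q_t, xi_t>
   is <= 0 because the proxy s_t is misclassified by, or lies on the boundary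
   of, the current (y_t, b_t); and |s_t| <= D + 2/c C because s_t is A_t
   moved by at most 2/c along v(y_t).  Projecting onto a closed convex cone
   containing u can only increase <q, u> and decrease |q|^2, and
   Cauchy-Schwarz concludes.  C is finite by norm equivalence, since every
   v(y) lies in the unit ball of the norm. *)

Section NormEquivalence.
Variables (R : realType) (d : nat).
Implicit Types x : 'rV[R]_d.

Lemma compact_unit_sphere : compact [set x : 'rV[R]_d | `|x| = 1].
Proof.
apply: bounded_closed_compact.
  exists 1; split; first by rewrite realE ler01.
  by move=> M M1 x /= ->; exact: ltW.
apply: (@preimage_closed _ _ (@Num.Def.normr R _) [set r : R | r = 1]).
  by move=> x _; exact: norm_continuous.
exact: closed_eq.
Qed.

Lemma row_coord_le_norm x i : `|x 0 i| <= `|x|.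
Proof. by rewrite [leRHS]/Num.Def.normr /= mx_normrE; apply/bigmax_geP; right; exists (0, i). Qed.

Variable nrm : 'rV[R]_d -> R.
Hypothesis nrm_norm : is_norm nrm.

Lemma nrm0 : nrm 0 = 0.
Proof. by case: nrm_norm => _ _ nrmZ _; rewrite -(scale0r 0) nrmZ normr0 mul0r. Qed.

Lemma nrmN x : nrm (- x) = nrm x.
Proof. by case: nrm_norm => _ _ nrmZ _; rewrite -scaleN1r nrmZ normrN1 mul1r. Qed.

Lemma nrm_gt0 x : x != 0 -> 0 < nrm x.
Proof. by case: nrm_norm => ge0 eq0 _ _ x0; rewrite lt_def ge0 andbT; apply: contra_neq x0 => /eq0. Qed.

Lemma nrm_le_mx_norm : exists K, forall x, nrm x <= K * `|x|.
Proof.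
case: nrm_norm => _ _ nrmZ nrmD.
exists (\sum_(i < d) nrm 'e_i) => x; rewrite {1}(row_sum_delta x) mulr_suml.
elim/big_ind2: _ => [|y1 s1 y2 s2 le1 le2|i _]; first by rewrite nrm0.
  by apply: le_trans (nrmD _ _) _; exact: lerD.
by rewrite nrmZ mulrC ler_wpM2l ?row_coord_le_norm //; case: nrm_norm.
Qed.

Lemma continuous_nrm : continuous nrm.
Proof.
have [K leK] := nrm_le_mx_norm; case: nrm_norm => ge0 _ _ nrmD.
have K1_gt0 : 0 < `|K| + 1 by rewrite ltr_wpDl.
move=> x; apply/(@cvgrPdist_lt _ _ _ (nbhs x) (nbhs_filter x)) => e e_gt0.
apply/(@nbhs_normP R _ x); exists (e / (`|K| + 1)); first by rewrite /= divr_gt0.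
move=> t /=; rewrite ltr_pdivlMr // => xt_lt.
have dist_le : `|nrm x - nrm t| <= nrm (x - t).
  rewrite ler_norml; have := nrmD (x - t) t; have := nrmD (t - x) x.
  by rewrite !subrK -opprB nrmN => ? ?; lra.
apply: (le_lt_trans dist_le); apply: (le_lt_trans (leK _)); apply: le_lt_trans xt_lt.
by rewrite mulrC ler_wpM2l ?normr_ge0 // (le_trans (ler_norm K)) // lerDl.
Qed.

Lemma nrm_ball_bounded : exists M, forall x, nrm x <= 1 -> `|x| <= M.
Proof.
case: nrm_norm => _ _ nrmZ _.
have sphere_norm x : x != 0 -> `| `|x|^-1 *: x | = 1.
  by move=> x0; rewrite normrZ normfV normr_id mulVf // normr_eq0.
have [[s0 Ss0]|S0] := pselect ([set x : 'rV[R]_d | `|x| = 1] !=set0); last first.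
  exists 0 => x _; have [->|x0] := eqVneq x 0; first by rewrite normr0.
  by exfalso; apply: S0; exists (`|x|^-1 *: x); exact: sphere_norm.
have [|m Sm m_min] := @EVT_min_rV R d nrm _ (ex_intro _ s0 Ss0) compact_unit_sphere.
  exact: continuous_subspaceT continuous_nrm.
have m_gt0 : 0 < nrm m.
  by apply: nrm_gt0; apply/eqP => m0; move: Sm; rewrite inE m0 normr0 => /eqP; rewrite eq_sym oner_eq0.
exists (nrm m)^-1 => x x_le1; have [->|x0] := eqVneq x 0; first by rewrite normr0 invr_ge0 ltW.
have := m_min (`|x|^-1 *: x); rewrite inE nrmZ normfV normr_id => /(_ (sphere_norm x x0)) le_m.
rewrite -(ler_pM2l m_gt0) mulfV ?gt_eqF //; apply: le_trans x_le1.
by rewrite -ler_pdivlMr ?normr_gt0 // mulrC.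
Qed.

End NormEquivalence.

Section InnerProduct.
Variables (R : realType) (d : nat).
Implicit Types (x y : 'rV[R]_d) (p q : 'rV[R]_d * R).

Lemma dotvC x y : dotv x y = dotv y x.
Proof. by apply: eq_bigr => i _; rewrite mulrC. Qed.

Lemma dotvDl x y (w : 'rV[R]_d) : dotv (x + y) w = dotv x w + dotv y w.
Proof. by rewrite /dotv -big_split; apply: eq_bigr => i _; rewrite !mxE mulrDl. Qed.

Lemma dotvZl (a : R) x y : dotv (a *: x) y = a * dotv x y.
Proof. by rewrite /dotv mulr_sumr; apply: eq_bigr => i _; rewrite !mxE mulrA. Qed.

Lemma dotvZr (a : R) x y : dotv x (a *: y) = a * dotv x y.
Proof. by rewrite dotvC dotvZl dotvC. Qed.

Lemma dotv0l y : dotv 0 y = 0.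
Proof. by rewrite -(scale0r 0) dotvZl mul0r. Qed.

Lemma dotv_ge0 x : 0 <= dotv x x.
Proof. by apply: sumr_ge0 => i _; rewrite -expr2 sqr_ge0. Qed.

Lemma dotv_gt0 x : x != 0 -> 0 < dotv x x.
Proof.
move=> x0; rewrite lt_def dotv_ge0 andbT; apply: contra_neq x0 => /eqP.
rewrite psumr_eq0 => [/allP x_eq0|i _]; last by rewrite -expr2 sqr_ge0.
apply/rowP => j; rewrite mxE; apply/eqP.
by rewrite -[_ == 0]orbb -mulf_eq0; exact: x_eq0 (mem_index_enum j).
Qed.

Lemma pdotC p q : pdot p q = pdot q p.
Proof. by rewrite /pdot dotvC mulrC. Qed.

Lemma pdotDl p q (u : 'rV[R]_d * R) : pdot (p + q) u = pdot p u + pdot q u.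
Proof. by rewrite /pdot dotvDl mulrDl addrACA. Qed.

Lemma pdotZl (a : R) p q : pdot (a *: p) q = a * pdot p q.
Proof. by rewrite /pdot dotvZl mulrDr mulrA. Qed.

Lemma pdotZr (a : R) p q : pdot p (a *: q) = a * pdot p q.
Proof. by rewrite pdotC pdotZl pdotC. Qed.

Lemma pdot0l p : pdot (0, 0) p = 0.
Proof. by rewrite /pdot dotv0l mul0r addr0. Qed.

Lemma pdot_ge0 p : 0 <= pdot p p.
Proof. by rewrite addr_ge0 ?dotv_ge0 // -expr2 sqr_ge0. Qed.

Lemma pdot_sqrD p q : pdot (p + q) (p + q) = pdot p p + 2 * pdot p q + pdot q q.
Proof. by rewrite !pdotDl ![pdot _ (p + q)]pdotC !pdotDl (pdotC q p); ring. Qed.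

Lemma pdot_sqrZ (a : R) p : pdot (a *: p) (a *: p) = a ^+ 2 * pdot p p.
Proof. by rewrite pdotZl pdotZr mulrA expr2. Qed.

Lemma sqr_le_of_quadratic_ge0 (a b c : R) : 0 <= c ->
  (forall t, 0 <= a - 2 * t * b + t ^+ 2 * c) -> b ^+ 2 <= a * c.
Proof.
move=> c_ge0 quad_ge0; have [c0|c_neq0] := eqVneq c 0.
  have [b0|b_neq0] := eqVneq b 0; first by rewrite b0 c0 expr0n mulr0.
  have := quad_ge0 ((a + 1) / (2 * b)); rewrite c0 mulr0 addr0.
  have -> : 2 * ((a + 1) / (2 * b)) * b = a + 1 by field; rewrite b_neq0.
  lra.
have c_gt0 : 0 < c by rewrite lt_def c_neq0.
have := quad_ge0 (b / c).
have -> : a - 2 * (b / c) * b + (b / c) ^+ 2 * c = a - b ^+ 2 / c by field.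
by rewrite subr_ge0 ler_pdivrMr.
Qed.

Lemma pdot_le_pnorm2 p q : pdot p q <= pnorm2 p * pnorm2 q.
Proof.
rewrite -sqrtrM ?pdot_ge0 //; apply: le_trans (ler_norm _) _.
rewrite -sqrtr_sqr ler_sqrt ?mulr_ge0 ?pdot_ge0 //.
apply: sqr_le_of_quadratic_ge0 (pdot_ge0 q) _ => t.
have := pdot_ge0 (p + (- t) *: q); rewrite pdot_sqrD pdot_sqrZ (pdotC p) pdotZl.
by rewrite sqrrN (pdotC q) mulNr mulrN mulrA (mulrC 2).
Qed.

Lemma pnorm2_norm2 x : pnorm2 (x, 0) = norm2 x.
Proof. by rewrite /pnorm2 /pdot mulr0 addr0. Qed.

Lemma norm2_ge0 x : 0 <= norm2 x.
Proof. exact: sqrtr_ge0. Qed.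

Lemma norm2_sqr x : norm2 x ^+ 2 = dotv x x.
Proof. by rewrite -pnorm2_norm2 sqr_sqrtr ?pdot_ge0 // /pdot mulr0 addr0. Qed.

Lemma norm2Z (a : R) x : norm2 (a *: x) = `|a| * norm2 x.
Proof. by rewrite /norm2 dotvZl dotvC dotvZl mulrA -expr2 sqrtrM ?sqr_ge0 // sqrtr_sqr. Qed.

Lemma norm2D_le x y : norm2 (x + y) <= norm2 x + norm2 y.
Proof.
have := pdot_le_pnorm2 (x, 0) (y, 0); rewrite !pnorm2_norm2 /pdot mulr0 addr0 => cs.
rewrite -(ler_pXn2r (_ : 0 < 2)%N) ?nnegrE ?addr_ge0 ?norm2_ge0 //.
by rewrite sqrrD !norm2_sqr dotvDl ![dotv _ (x + y)]dotvC !dotvDl (dotvC y x); lra.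
Qed.

End InnerProduct.

Section ConeProjection.
Variables (R : realType) (d : nat).
Implicit Types (L : set ('rV[R]_d * R)) (z p h u : 'rV[R]_d * R).

Lemma psubE z p : psub z p = z - p.
Proof. by []. Qed.

Lemma le0_of_first_order (a b : R) : 0 <= b ->
  (forall e, 0 < e <= 1 -> 2 * e * a <= e ^+ 2 * b) -> a <= 0.
Proof.
move=> b_ge0 first_order; rewrite leNgt; apply/negP => a_gt0.
have ab_gt0 : 0 < a + b by lra.
have e_gt0 : 0 < a / (a + b) by rewrite divr_gt0.
have e_le1 : a / (a + b) <= 1 by rewrite ler_pdivrMr // mul1r lerDl.
have := first_order (a / (a + b)); rewrite e_gt0 e_le1 => /(_ isT).
rewrite [2 * _]mulrC -mulrA expr2 -mulrA ler_pM2l // mulrAC ler_pdivlMr // => ?; nra.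
Qed.

Lemma is_proj_obtuse L z p h : is_proj L z p ->
  (forall e, 0 < e <= 1 -> L (p + e *: h)) -> pdot (z - p) h <= 0.
Proof.
case=> _ p_min dir; apply: le0_of_first_order (pdot_ge0 h) _ => e e01.
have := p_min _ (dir e e01); rewrite /pnorm2 ler_sqrt ?pdot_ge0 //.
rewrite !psubE opprD addrA -scaleNr.
by rewrite (pdot_sqrD (z - p)) pdot_sqrZ pdotZr sqrrN; lra.
Qed.

Lemma is_proj_cone L z p u : closed_convex_cone L -> is_proj L z p -> L u ->
  pdot z u <= pdot p u /\ pdot p p <= pdot z z.
Proof.
case=> _ _ LD LZ projp Lu; have Lp := projp.1.
have obtuse_u : pdot (z - p) u <= 0.
  by apply: is_proj_obtuse projp _ => e /andP [e_gt0 _]; exact: LD Lp (LZ _ _ (ltW e_gt0) Lu).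
have obtuse_p : pdot (z - p) (- p) <= 0.
  apply: is_proj_obtuse projp _ => e /andP [_ e_le1].
  have -> : p + e *: - p = (1 - e) *: p by rewrite scalerBl scale1r scalerN.
  by apply: (LZ _ _ _ Lp); lra.
move: obtuse_u obtuse_p; set w := z - p => obtuse_u obtuse_p.
have -> : z = p + w by rewrite addrC subrK.
move: obtuse_p; rewrite pdotDl pdot_sqrD (pdotC p w) -scaleN1r pdotZr.
by have := pdot_ge0 w; lra.
Qed.

End ConeProjection.

Lemma sup_eq_max (R : realType) (E : set R) x : E x -> ubound E x -> sup E = x.
Proof.
move=> Ex ubx; apply/eqP; rewrite eq_le ge_sup //=; last by exists x.
by apply: ub_le_sup => //; exists x.
Qed.

Section StrategicResponse.
Variables (R : realType) (d : nat) (nrm : 'rV[R]_d -> R) (c : R)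
  (v : 'rV[R]_d -> 'rV[R]_d) (lab : 'rV[R]_d -> bool).
Hypotheses (nrm_norm : is_norm nrm) (c_gt0 : 0 < c) (v_sel : is_selection nrm v).
Implicit Types (A y : 'rV[R]_d) (b : R).

Lemma dualn0 : dualn nrm 0 = 0.
Proof.
apply: sup_eq_max; first by exists 0; rewrite /= ?(nrm0 nrm_norm) ?ler01 ?dotv0l.
by move=> _ [w _ <-]; rewrite dotv0l.
Qed.

Lemma dualn_sel y : y != 0 -> dualn nrm y = dotv y (v y).
Proof.
move=> y0; case: v_sel => _ /(_ y y0) [v_le1 v_max] _.
by apply: sup_eq_max; [exists (v y) | move=> _ [w /v_max le_w <-]].
Qed.

Lemma dualn_gt0 y : y != 0 -> 0 < dualn nrm y.
Proof.
move=> y0; rewrite dualn_sel //; case: v_sel => _ /(_ y y0) [_ v_max] _.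
case: nrm_norm => _ _ nrmZ _; have ny_gt0 := nrm_gt0 nrm_norm y0.
have unit_le1 : nrm ((nrm y)^-1 *: y) <= 1.
  by rewrite nrmZ ger0_norm ?invr_ge0 ?(ltW ny_gt0) // mulVf ?gt_eqF.
apply: lt_le_trans (v_max _ unit_le1).
by rewrite dotvZr mulr_gt0 ?invr_gt0 ?dotv_gt0.
Qed.

Lemma dotv_sel_shift y A (z : R) : y != 0 ->
  dotv y (A + z *: v y) = dotv y A + z * dualn nrm y.
Proof. by move=> y0; rewrite dualn_sel // !(dotvC y) dotvDl dotvZl. Qed.

Lemma proxy_shift A y b :
  exists z, `|z| <= 2 / c /\ proxy nrm c v lab A y b = A + z *: v y.
Proof.
have two_c_gt0 : 0 < 2 / c by rewrite divr_gt0.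
have no_shift : exists z, `|z| <= 2 / c /\ A = A + z *: v y.
  by exists 0; rewrite normr0 scale0r addr0 ltW.
rewrite /proxy /in_range; case: eqP => [_|_]; first exact: no_shift.
set S := dotv y A + b; set δ := dualn nrm y.
case: ifP => [/andP [S_ge0 S_lt]|_]; last exact: no_shift.
by case: (lab A); [exists (2 / c - S / δ) | exists (- (S / δ))];
  rewrite ?scaleNr; split=> //; rewrite ler_norml; lra.
Qed.

Lemma mistake_margin A y b : mistake nrm c v lab A y b ->
  ell lab A * (dotv y (proxy nrm c v lab A y b) + b) <= 0.
Proof.
rewrite /mistake /predl /resp /proxy /ell /sgn.
have [->|y0] := eqVneq y 0.
  rewrite dualn0 dotv0l mulr0 mul0r subr0 add0r.
  by case: (lab A); case: (lerP 0 b) => b_sgn; rewrite ?eqxx //= => _; lra.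
have δ_gt0 := dualn_gt0 y0.
set S := dotv y A + b; set δ := dualn nrm y.
case: (boolP (in_range nrm c A y b)) => [|out_range].
  rewrite /in_range -/S -/δ => /andP [S_ge0 S_lt].
  (* The agent moves exactly onto the boundary, where sgn 0 = +1; so only a
     negative agent is a mistake, and its proxy lies on the hyperplane. *)
  have on_boundary : dotv y (A + (2 / c - S / δ) *: v y) + b - 2 * δ / c = 0.
    by rewrite dotv_sel_shift // /S /δ; field; rewrite (gt_eqF c_gt0) (gt_eqF δ_gt0).
  rewrite on_boundary lexx; case: (lab A); rewrite ?eqxx // => _.
  rewrite -scaleNr dotv_sel_shift // -/δ.
  have -> : dotv y A + - (S / δ) * δ + b = 0 by rewrite /S /δ; field; rewrite (gt_eqF δ_gt0).
  by rewrite mulr0.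
move: out_range; rewrite /in_range -/S -/δ ler_pdivlMr // mul0r ltr_pdivrMr //.
rewrite negb_and -ltNge -leNgt [2 * δ / c]mulrAC.
have two_c_gt0 : 0 < 2 / c * δ by rewrite mulr_gt0 ?divr_gt0.
by case: (lab A); case: (lerP 0 S); case: (lerP 0 (S - 2 / c * δ)); rewrite ?eqxx //= => *; lra.
Qed.

Lemma norm2_proxy_le A y b (D C : R) : norm2 A <= D ->
  (forall y', norm2 (v y') <= C) -> norm2 (proxy nrm c v lab A y b) <= D + 2 / c * C.
Proof.
move=> A_le v_le; have [z [z_le ->]] := proxy_shift A y b.
apply: le_trans (norm2D_le _ _) _; rewrite norm2Z lerD //.
by apply: ler_pM; rewrite ?normr_ge0 ?norm2_ge0.
Qed.

Lemma norm2_selection_bounded : has_ubound [set norm2 (v y) | y in [set: 'rV[R]_d]].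
Proof.
have [M ball_le] := nrm_ball_bounded nrm_norm.
exists (Num.sqrt (d%:R * M ^+ 2)) => _ [y _ <-].
have v_le1 : nrm (v y) <= 1.
  have [->|y0] := eqVneq y 0; last by case: v_sel => _ /(_ y y0) [].
  by case: v_sel => -> _ _; rewrite (nrm0 nrm_norm) ler01.
have M_ge0 : 0 <= M := le_trans (normr_ge0 _) (ball_le _ v_le1).
rewrite /norm2 ler_sqrt ?mulr_ge0 ?ler0n ?sqr_ge0 //.
apply: le_trans (_ : \sum_(i < d) M ^+ 2 <= _); last by rewrite sumr_const card_ord mulr_natl.
apply: ler_sum => i _; rewrite -expr2 -real_normK ?num_real // lerXn2r ?nnegrE ?normr_ge0 //.
exact: le_trans (row_coord_le_norm _ _) (ball_le _ v_le1).
Qed.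

End StrategicResponse.

Section ProjectedPerceptron.
Variables (R : realType) (d : nat) (nrm : 'rV[R]_d -> R) (c : R)
  (v : 'rV[R]_d -> 'rV[R]_d) (lab : 'rV[R]_d -> bool).
Hypotheses (nrm_norm : is_norm nrm) (c_gt0 : 0 < c) (v_sel : is_selection nrm v).
Variables (D C : R).
Hypothesis v_le : forall y, norm2 (v y) <= C.
Let K := (D + 2 / c * C) ^+ 2 + 1.

Lemma pre_update_bounds (A : 'rV[R]_d) (q u : 'rV[R]_d * R) : norm2 A <= D ->
  let m := mistake nrm c v lab A q.1 q.2 in
  let z := pre_update nrm c v lab 1 A q in
  pdot q u + (if m then 1 - hinge u (xi nrm c v lab A q.1 q.2) (ell lab A) else 0) <= pdot z u
  /\ pdot z z <= pdot q q + (if m then K else 0).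
Proof.
move=> A_le m z; rewrite /z /pre_update -/m; case: ifP => mis; last by rewrite !addr0.
set s := xi nrm c v lab A q.1 q.2; set l := ell lab A.
have -> : (q.1 + (1 * l) *: s.1, q.2 + 1 * l * s.2) = q + l *: s by rewrite !mul1r.
have l_sqr : l ^+ 2 = 1 by rewrite /l /ell; case: (lab A); rewrite ?sqrrN expr1n.
have cross_le0 : l * pdot q s <= 0 by rewrite /pdot mulr1; exact: mistake_margin.
have s_le : pdot s s <= K.
  have s1_le : norm2 s.1 <= D + 2 / c * C by exact: norm2_proxy_le.
  rewrite /pdot mulr1 lerD2r -norm2_sqr lerXn2r ?nnegrE ?norm2_ge0 //.
  exact: le_trans (norm2_ge0 _) s1_le.
rewrite pdotDl pdotZl pdot_sqrD pdotZr pdot_sqrZ l_sqr mul1r; split.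
  have : 1 - l * pdot u s <= hinge u s l by rewrite /hinge le_max lexx orbT.
  by rewrite pdotC; lra.
lra.
Qed.

Lemma mistakesS T (A : nat -> 'rV[R]_d) (q : nat -> 'rV[R]_d * R) :
  mistakes nrm c v lab T.+1 A q = mistakes nrm c v lab T A q ++
    (if mistake nrm c v lab (A T.+1) (q T.+1).1 (q T.+1).2 then [:: T.+1] else [::]).
Proof. by rewrite /mistakes -[T.+2]addn1 iotaD filter_cat /= add0n; case: ifP. Qed.

(* q_(T+1) is not part of the run, so the invariant is stated for the last
   point before projection. *)
Lemma perceptron_potential L T (A : nat -> 'rV[R]_d) (q : nat -> 'rV[R]_d * R) u :
  closed_convex_cone L -> is_projected_perceptron nrm c v lab L 1 T A q -> L u ->
  (forall t, (t <= T)%N -> norm2 (A t) <= D) ->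
  let M := mistakes nrm c v lab T A q in
  let z := pre_update nrm c v lab 1 (A T) (q T) in
  \sum_(t <- M) (1 - hinge u (xi nrm c v lab (A t) (q t).1 (q t).2) (ell lab (A t)))
    <= pdot z u /\ pdot z z <= (size M)%:R * K.
Proof.
move=> L_cone [q0 q_proj] Lu A_le; elim: T q_proj A_le => [|T IH] q_proj A_le /=.
  have := pre_update_bounds (q 0%N) u (A_le 0%N isT).
  rewrite /mistakes /= q0 !pdot0l add0r.
  by case: ifP => _; rewrite ?big_cons big_nil ?addr0 ?q0 ?mul1r ?mul0r ?add0r.
have [z_u z_z] := IH (fun t lt_t => q_proj t (ltnW lt_t)) (fun t le_t => A_le t (leqW le_t)).
have [p_u p_p] := is_proj_cone L_cone (q_proj T (ltnSn T)) Lu.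
have [zS_u zS_z] := pre_update_bounds (q T.+1) u (A_le T.+1 (leqnn _)).
rewrite mistakesS big_cat size_cat natrD /=; move: zS_u zS_z.
case: ifP => _; rewrite ?big_cons big_nil ?addr0 /= => zS_u zS_z; split; lra.
Qed.

End ProjectedPerceptron.

Theorem mainTheorem15 (R : realType) (d : nat)
  (Aset : set 'rV[R]_d) (lab : 'rV[R]_d -> bool)
  (nrm : 'rV[R]_d -> R) (c : R) (v : 'rV[R]_d -> 'rV[R]_d)
  (L : set ('rV[R]_d * R)) (T : nat)
  (A : nat -> 'rV[R]_d) (q : nat -> 'rV[R]_d * R) :
  is_norm nrm -> 0 < c -> is_selection nrm v ->
  closed_convex_cone L ->
  (* Boundedness: D = sup_{A in Aset} ||A||_2 < oo *)
  has_ubound [set norm2 a | a in Aset] ->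
  (forall t, (t <= T)%N -> Aset (A t)) ->
  is_projected_perceptron nrm c v lab L 1 T A q ->
  let D := sup [set norm2 a | a in Aset] in
  let C := sup [set norm2 (v y) | y in [set: 'rV[R]_d]] in
  let Dt := D + 2 / c * C in
  let M := mistakes nrm c v lab T A q in
  forall (y : 'rV[R]_d) (b : R), L (y, b) -> (y, b) != (0, 0) ->
    (size M)%:R
      - \sum_(t <- M) hinge (y, b) (xi nrm c v lab (A t) (q t).1 (q t).2) (ell lab (A t))
    <= Num.sqrt (norm2 y ^+ 2 + b ^+ 2) * Num.sqrt (Dt ^+ 2 + 1) * Num.sqrt (size M)%:R.
Proof.
move=> nrm_norm c_gt0 v_sel L_cone A_bounded A_in run D C Dt M y b Lyb _.
have v_le y' : norm2 (v y') <= C.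
  by apply: (ub_le_sup (norm2_selection_bounded nrm_norm v_sel)); exists y'.
have A_le t : (t <= T)%N -> norm2 (A t) <= D.
  by move=> le_tT; apply: (ub_le_sup A_bounded); exists (A t) => //; exact: A_in.
have [z_u z_z] := perceptron_potential nrm_norm c_gt0 v_sel v_le L_cone run Lyb A_le.
rewrite -sum1_size natr_sum -sumrB; apply: le_trans z_u _.
apply: le_trans (pdot_le_pnorm2 _ _) _.
have -> : pnorm2 (y, b) = Num.sqrt (norm2 y ^+ 2 + b ^+ 2) by rewrite norm2_sqr expr2.
rewrite mulrC -mulrA ler_wpM2l ?sqrtr_ge0 // -sqrtrM ?addr_ge0 ?sqr_ge0 //.
by rewrite -natr_sum sum1_size /pnorm2 ler_sqrt ?mulr_ge0 ?addr_ge0 ?sqr_ge0 // mulrC.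
Qed.
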